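(* Let $S:\mathbb Z^d\to\mathbb Z^d$ be an automorphism with $\mathrm{spec}(S)=\{1\}$. Then there are integers $n_1\ge n_2\ge\cdots\ge n_J>0$ with $\sum_j n_j=d$ and a basis of $\mathbb Z^d$ with respect to which $S$ is represented by a matrix $A$ whose block decomposition $A=(B_{\alpha,\beta})_{1\le\alpha,\beta\le J}$ of type $(n_1,\dots,n_J)$ satisfies: (a) $B_{\alpha,\alpha}=I$ for $\alpha=1,\dots,J$; (b) $B_{\alpha,\beta}=0$ for $\alpha<\beta$; (c) $B_{\alpha,\alpha-1}$ has rank $n_\alpha$ for $\alpha=2,\dots,J$.
   Context: The block decomposition of type $(n_1,\dots,n_J)$ of a $d\times d$ matrix $A$ consists of the $n_\alpha\times n_\beta$ matrices $B_{\alpha,\beta}$ whose $(i,j)$ entry is the $(n_1+\cdots+n_{\alpha-1}+i,\ n_1+\cdots+n_{\beta-1}+j)$ entry of $A$. $\mathrm{spec}$ denotes the set of eigenvalues. *)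

From HB Require Import structures.
From mathcomp Require Import all_boot all_order all_algebra all_field.
Set Implicit Arguments. Unset Strict Implicit. Unset Printing Implicit Defensive.
Import Order.TTheory GRing.Theory Num.Theory.
Local Open Scope ring_scope.

(* Entry (i,j) (0-based, natural-number indices) of a d x d matrix, 0 if out of range. *)
Definition mxe (R : pzRingType) (d : nat) (A : 'M[R]_d) (i j : nat) : R :=
  match @insub nat (fun k => k < d)%N 'I_d i, @insub nat (fun k => k < d)%N 'I_d j with
  | Some i', Some j' => A i' j'
  | _, _ => 0
  end.

(* offset n_1 + ... + n_a  (blocks indexed from 0) *)
Definition offs (ns : seq nat) (a : nat) : nat := (\sum_(k < a) nth 0 ns k)%N.

Definition blk (R : pzRingType) (d : nat) (ns : seq nat) (A : 'M[R]_d) (a b : nat)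
  : 'M[R]_(nth 0%N ns a, nth 0%N ns b) :=
  \matrix_(i, j) mxe A (offs ns a + i) (offs ns b + j).

Definition zrank (m n : nat) (B : 'M[int]_(m, n)) : nat :=
  \rank (map_mx (fun z : int => z%:~R : rat) B).

From HB Require Import structures.
From mathcomp Require Import all_boot all_order all_algebra all_field all_fingroup.
Import Order.TTheory GRing.Theory Num.Theory.
Set Implicit Arguments. Unset Strict Implicit. Unset Printing Implicit Defensive.
Local Open Scope ring_scope.

(* Put N := S - 1.  As 1 is the only complex eigenvalue of S,
   N is nilpotent (Cayley-Hamilton), and we show by strong induction on d that
   every unipotent S : 'M[int]_d has the required normal form.  If d > 0 then N
   is singular, so the Smith normal form followed by an order-reversing
   permutation gives a unimodular Q with Q^-1 N Q = [[0, 0], [X, Y]], where the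
   zero block row has height m > 0 and [X Y] has full row rank r.  Then
   Q^-1 S Q = [[1, 0], [X, 1 + Y]] with 1 + Y unipotent of size r < d; by
   induction P^-1 (1 + Y) P is in normal form of some type ns, and conjugating by
   diag(1, P) gives the normal form of type m :: ns.  The new subdiagonal block,
   the first n_1 rows of P^-1 X, has full rank since the first n_1 rows of
   P^-1 Y P vanish; its rank n_1 is at most m, so the type stays nonincreasing. *)

Definition ratmx m n (A : 'M[int]_(m, n)) : 'M[rat]_(m, n) :=
  map_mx (fun z : int => z%:~R : rat) A.

Lemma ratmxM m n p (A : 'M[int]_(m, n)) (B : 'M_(n, p)) :
  ratmx (A *m B) = ratmx A *m ratmx B.
Proof. exact: map_mxM. Qed.

Lemma ratmx_unit n (A : 'M[int]_n) : A \in unitmx -> ratmx A \in unitmx.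
Proof.
rewrite !unitmxE /ratmx det_map_mx unitfE intr_eq0.
by apply: contraTneq => ->; rewrite unitr0.
Qed.

Lemma mxrank_mulmx_unitl (F : fieldType) m n (U : 'M[F]_m) (A : 'M_(m, n)) :
  U \in unitmx -> \rank (U *m A) = \rank A.
Proof. by move=> uU; rewrite eqmxMfull // row_full_unit. Qed.

Lemma mxrank_mulmx_unitr (F : fieldType) m n (U : 'M[F]_n) (A : 'M_(m, n)) :
  U \in unitmx -> \rank (A *m U) = \rank A.
Proof. by move=> uU; rewrite mxrankMfree // row_free_unit. Qed.

Lemma mxrank_castmx (F : fieldType) m n m' n' (e : (m = m') * (n = n'))
  (A : 'M[F]_(m, n)) : \rank (castmx e A) = \rank A.
Proof. by case: e => em en; case: m' / em; case: n' / en; rewrite castmx_id. Qed.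

Lemma rank_first_rows (F : fieldType) n0 r m p (W : 'M[F]_(r, m)) (V : 'M_(r, p)) :
  (n0 <= r)%N -> row_free (row_mx W V) -> (pid_mx n0 : 'M_(n0, r)) *m V = 0 ->
  \rank ((pid_mx n0 : 'M_(n0, r)) *m W) = n0.
Proof.
move=> hn0 freeWV V0; have := mxrankMfree (pid_mx n0 : 'M_(n0, r)) freeWV.
by rewrite mul_mx_row V0 rank_row_mx0 rank_pid_mx.
Qed.

Lemma invmx_mul (R : comUnitRingType) n (A B : 'M[R]_n) :
  A \in unitmx -> B \in unitmx -> invmx (A *m B) = invmx B *m invmx A.
Proof.
move=> uA uB; have uAB : A *m B \in unitmx by rewrite unitmx_mul uA.
have h : invmx B *m invmx A *m (A *m B) = 1%:M by rewrite mulmxA mulmxKV // mulVmx.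
by rewrite -[LHS]mul1mx -h mulmxK.
Qed.

Lemma invmx_perm (R : comUnitRingType) n (s : 'S_n) :
  invmx (perm_mx s : 'M[R]_n) = perm_mx s^-1.
Proof.
have h : perm_mx s^-1 *m perm_mx s = 1%:M :> 'M[R]_n.
  by rewrite -perm_mxM mulVg perm_mx1.
by rewrite -[LHS]mul1mx -h mulmxK ?unitmx_perm.
Qed.

Lemma conjmx_expr (R : comUnitRingType) n (Q N : 'M[R]_n) k : Q \in unitmx ->
  (invmx Q *m N *m Q) ^+ k = invmx Q *m N ^+ k *m Q.
Proof.
move=> uQ; elim: k => [|k IH]; first by rewrite !expr0 mulmx1 mulVmx.
by rewrite !exprS -!mulmxE IH !mulmxA mulmxK.
Qed.

Lemma map_mxX (R S : pzRingType) (f : {rmorphism R -> S}) n (A : 'M[R]_n) k :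
  map_mx f (A ^+ k) = map_mx f A ^+ k.
Proof.
elim: k => [|k IH]; first by rewrite !expr0 map_scalar_mx rmorph1.
by rewrite !exprS -!mulmxE map_mxM IH.
Qed.

Lemma lower_block_expr (R : pzRingType) m r (A : 'M[R]_m) (X : 'M_(r, m))
  (Y : 'M_r) k :
  exists Z, block_mx A 0 X Y ^+ k = block_mx (A ^+ k) 0 Z (Y ^+ k).
Proof.
elim: k => [|k [Z IH]]; first by exists 0; rewrite !expr0 -scalar_mx_block.
exists (X *m A ^+ k + Y *m Z).
by rewrite !exprS -!mulmxE IH mulmx_block !mulmx0 !mul0mx !addr0 add0r.
Qed.

Section Entries.
Variable R : pzRingType.

Lemma mxe_ord d (A : 'M[R]_d) (i j : 'I_d) : mxe A i j = A i j.
Proof. by rewrite /mxe !valK. Qed.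

Lemma mxe_outl d (A : 'M[R]_d) i j : (d <= i)%N -> mxe A i j = 0.
Proof. by move=> hi; rewrite /mxe insubF // ltnNge hi. Qed.

Lemma mxe_outr d (A : 'M[R]_d) i j : (d <= j)%N -> mxe A i j = 0.
Proof. by move=> hj; rewrite /mxe [insub j]insubF ?ltnNge ?hj //; case: insub. Qed.

Variables (m r : nat) (Aul : 'M[R]_m) (Aur : 'M[R]_(m, r)).
Variables (Adl : 'M[R]_(r, m)) (Adr : 'M[R]_r).

Lemma mxe_block_ul (i j : 'I_m) : mxe (block_mx Aul Aur Adl Adr) i j = Aul i j.
Proof. by rewrite (mxe_ord _ (lshift r i) (lshift r j)) block_mxEul. Qed.

Lemma mxe_block_ur0 (i : 'I_m) j : mxe (block_mx Aul 0 Adl Adr) i (m + j) = 0.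
Proof.
have [hj|hj] := ltnP j r; last by rewrite mxe_outr ?leq_add2l.
by rewrite (mxe_ord _ (lshift r i) (rshift m (Ordinal hj))) block_mxEur mxE.
Qed.

Lemma mxe_block_dl (i : 'I_r) (j : 'I_m) :
  mxe (block_mx Aul Aur Adl Adr) (m + i) j = Adl i j.
Proof. by rewrite (mxe_ord _ (rshift m i) (lshift r j)) block_mxEdl. Qed.

Lemma mxe_block_dr i j :
  mxe (block_mx Aul Aur Adl Adr) (m + i) (m + j) = mxe Adr i j.
Proof.
have [hi|hi] := ltnP i r; last by rewrite !mxe_outl ?leq_add2l.
have [hj|hj] := ltnP j r; last by rewrite !mxe_outr ?leq_add2l.
rewrite (mxe_ord _ (rshift m (Ordinal hi)) (rshift m (Ordinal hj))) block_mxEdr.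
by rewrite (mxe_ord _ (Ordinal hi) (Ordinal hj)).
Qed.

End Entries.

Lemma offs0 ns : offs ns 0 = 0%N.
Proof. by rewrite /offs big_ord0. Qed.

Lemma offsS n ns a : offs (n :: ns) a.+1 = (n + offs ns a)%N.
Proof. by rewrite /offs big_ord_recl. Qed.

Lemma nth0_leq_sumn ns : (nth 0%N ns 0 <= sumn ns)%N.
Proof. by case: ns => //= n ns; apply: leq_addr. Qed.

Lemma exists_block ns j : (j < sumn ns)%N ->
  exists2 b, (b < size ns)%N & (offs ns b <= j < offs ns b + nth 0%N ns b)%N.
Proof.
elim: ns j => [|n ns IH] j //= hj.
have [hjn|hjn] := ltnP j n; first by exists 0%N; rewrite // offs0.
have [|b hb /andP[hb1 hb2]] := IH (j - n)%N; first by rewrite ltn_subLR.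
exists b.+1; rewrite // offsS -leq_subRL // hb1 /=.
by rewrite -addnA -ltn_subLR.
Qed.

Definition in_normal_form d (ns : seq nat) (A : 'M[int]_d) : Prop :=
  [/\ forall a : nat, (a < size ns)%N -> blk ns A a a = 1%:M,
      forall a b : nat, (a < b)%N -> (b < size ns)%N -> blk ns A a b = 0 &
      forall a : nat, (0 < a)%N -> (a < size ns)%N ->
        zrank (blk ns A a a.-1) = nth 0%N ns a].

Definition has_normal_form d (S : 'M[int]_d) : Prop :=
  exists (ns : seq nat) (P : 'M[int]_d),
    [/\ sorted (fun x y : nat => (y <= x)%N) ns, all (fun x : nat => (0 < x)%N) ns,
        sumn ns = d, P \in unitmx & in_normal_form ns (invmx P *m S *m P)].

Lemma has_normal_form0 (S : 'M[int]_0) : has_normal_form S.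
Proof. by exists [::], 1%:M; split; rewrite ?unitmx1. Qed.

Lemma has_normal_form_conj d (S Q : 'M[int]_d) : Q \in unitmx ->
  has_normal_form S -> has_normal_form (Q *m S *m invmx Q).
Proof.
move=> uQ [ns [P [ns_sorted ns_pos ns_sum uP nfP]]]; exists ns, (Q *m P).
have -> : invmx (Q *m P) *m (Q *m S *m invmx Q) *m (Q *m P) = invmx P *m S *m P.
  by rewrite invmx_mul // !mulmxA !mulmxKV.
by split; rewrite // unitmx_mul uQ.
Qed.

(* In block normal form, row i < n_1 of [A] is row i of the identity, because
   the first block row is [1 0 ... 0]. *)
Lemma in_normal_form_row0 r ns (A : 'M[int]_r) i j :
  in_normal_form ns A -> sumn ns = r -> (i < nth 0%N ns 0)%N -> (j < r)%N ->
  mxe A i j = (i == j)%:R.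
Proof.
move=> [diag1 upper0 _] ns_sum hi hj.
have := @exists_block ns j; rewrite ns_sum => /(_ hj) [b hb /andP[hb1 hb2]].
have hjb : (j - offs ns b < nth 0%N ns b)%N by rewrite ltn_subLR.
have := erefl (blk ns A 0 b (Ordinal hi) (Ordinal hjb)).
rewrite {2}mxE offs0 add0n subnKC // => <-.
case: b => [|b] in hb hb1 hb2 hjb *.
  by rewrite diag1 // mxE -val_eqE /= offs0 subn0.
rewrite (upper0 0%N b.+1) // mxE; case: eqP => // eij.
have : (nth 0%N ns 0 <= offs ns b.+1)%N by rewrite /offs big_ord_recl leq_addr.
by move=> /leq_trans/(_ hb1); rewrite -eij leqNgt hi.
Qed.

Lemma in_normal_form_first_rows r ns (A : 'M[int]_r) :
  in_normal_form ns A -> sumn ns = r ->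
  (pid_mx (nth 0%N ns 0) : 'M_(nth 0%N ns 0, r)) *m (A - 1%:M) = 0.
Proof.
move=> nfA ns_sum; have hn0 : (nth 0%N ns 0 <= r)%N by rewrite -ns_sum nth0_leq_sumn.
apply/matrixP => i j; rewrite (pid_mxErow _ hn0) -rowsubE !mxE -mxe_ord.
by rewrite (in_normal_form_row0 nfA ns_sum (ltn_ord i) (ltn_ord j)) -val_eqE subrr.
Qed.

Section ExtendedBlocks.
Variables (m r : nat) (W : 'M[int]_(r, m)) (A : 'M[int]_r) (ns : seq nat).
Let B := block_mx 1%:M 0 W A.

Lemma blk_extend_diag0 : blk (m :: ns) B 0 0 = 1%:M.
Proof. by apply/matrixP => i j; rewrite !mxE offs0 mxe_block_ul mxE. Qed.

Lemma blk_extend_row0 b : blk (m :: ns) B 0 b.+1 = 0.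
Proof.
apply/matrixP => i j; rewrite !mxE offs0 offsS add0n -addnA.
exact: (mxe_block_ur0 _ _ _ i).
Qed.

Lemma blk_extend_shift a b : blk (m :: ns) B a.+1 b.+1 = blk ns A a b.
Proof. by apply/matrixP => i j; rewrite !mxE !offsS -!addnA mxe_block_dr. Qed.

Lemma blk_extend_sub (h : (nth 0%N ns 0 <= r)%N) :
  blk (m :: ns) B 1 0 = pid_mx (nth 0%N ns 0) *m W.
Proof.
apply/matrixP => i j; rewrite (pid_mxErow _ h) -rowsubE !mxE offsS !offs0 addn0.
exact: (mxe_block_dl _ _ _ _ (widen_ord h i) j).
Qed.

Lemma in_normal_form_extend : in_normal_form ns A ->
  ((0 < size ns)%N -> zrank (blk (m :: ns) B 1 0) = nth 0%N ns 0) ->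
  in_normal_form (m :: ns) B.
Proof.
move=> [diag1 upper0 subrank] sub0rank; split.
- by case=> [|a] ha; rewrite ?blk_extend_diag0 ?blk_extend_shift ?diag1.
- by case=> [|a] [|b] // hab hb; rewrite ?blk_extend_row0 ?blk_extend_shift ?upper0.
- by case=> [|[|a]] // _ ha; rewrite ?sub0rank //= blk_extend_shift subrank.
Qed.

End ExtendedBlocks.

Lemma has_normal_form_extend m r (X : 'M[int]_(r, m)) (Y : 'M[int]_r) :
  (0 < m)%N -> \rank (ratmx (row_mx X Y)) = r -> has_normal_form (1%:M + Y) ->
  has_normal_form (block_mx 1%:M 0 X (1%:M + Y)).
Proof.
move=> m_gt0 rankXY [ns [P [ns_sorted ns_pos ns_sum uP nfA]]].
set A := invmx P *m (1%:M + Y) *m P in nfA; set W := invmx P *m X.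
have hn0 : (nth 0%N ns 0 <= r)%N by rewrite -ns_sum nth0_leq_sumn.
pose PP := block_mx (1%:M : 'M[int]_m) 0 0 P.
have uPP : PP \in unitmx by rewrite block_diag_mx_unit unitmx1.
have conjPP : invmx PP *m block_mx 1%:M 0 X (1%:M + Y) *m PP = block_mx 1%:M 0 W A.
  rewrite invmx_block_diag // invmx1 !mulmx_block.
  by rewrite !mulmx0 !mul0mx !mulmx1 !addr0 !add0r mul0mx.
(* [row_mx W (A - 1)] is [row_mx X Y] multiplied by unimodular matrices *)
have freeWA : row_free (ratmx (row_mx W (A - 1%:M))).
  have -> : row_mx W (A - 1%:M) = invmx P *m row_mx X Y *m block_mx 1%:M 0 0 P.
    rewrite mul_mx_row mul_row_block !mulmx0 !addr0 !add0r mulmx1 /A.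
    by rewrite mulmxDr mulmxDl mulmx1 mulVmx // addrC addKr.
  rewrite /row_free !ratmxM mxrank_mulmx_unitr ?ratmx_unit //.
  by rewrite mxrank_mulmx_unitl ?rankXY ?ratmx_unit ?unitmx_inv.
have subrank : zrank (blk (m :: ns) (block_mx 1%:M 0 W A) 1 0) = nth 0%N ns 0.
  rewrite blk_extend_sub // /zrank -/(ratmx _) ratmxM /ratmx map_pid_mx.
  apply: (rank_first_rows (V := ratmx (A - 1%:M)) hn0).
    by rewrite /ratmx -map_row_mx.
  have := congr1 (@ratmx _ _) (in_normal_form_first_rows nfA ns_sum).
  by rewrite ratmxM /ratmx map_pid_mx map_mx0.
exists (m :: ns), PP; split => //=.
- by move: ns_sorted subrank; case: (ns) => //= n ns' -> <-; rewrite andbT rank_leq_col.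
- by rewrite m_gt0.
- by rewrite ns_sum.
- by rewrite conjPP; apply: in_normal_form_extend.
Qed.

Lemma sorted_dvdz_zero (s : seq int) i :
  sorted dvdz s -> (find (pred1 (0 : int)) s <= i)%N -> s`_i = 0.
Proof.
move=> s_sorted hi; have [his|his] := ltnP i (size s); last by rewrite nth_default.
have hf : (find (pred1 (0 : int)) s < size s)%N by apply: leq_ltn_trans hi his.
have /eqP s_f0 : s`_(find (pred1 (0 : int)) s) == 0.
  by apply: (@nth_find _ 0 (pred1 (0 : int))); rewrite has_find.
have := sorted_leq_nth (@dvdz_trans) dvdzz 0 s_sorted (find (pred1 (0 : int)) s) i.
by rewrite !inE s_f0 dvd0z => /(_ hf his hi) /eqP.
Qed.

(* From the Smith normal form [N = L D R]: conjugating by [L] leaves [D (R L)],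
   whose rows of index at least [rank N] vanish. *)
Lemma conj_zero_last_rows d (N : 'M[int]_d) :
  exists2 L : 'M[int]_d, L \in unitmx &
    forall i j : 'I_d, (\rank (ratmx N) <= i)%N -> (invmx L *m N *m L) i j = 0.
Proof.
have [L uL [R uR [s s_sorted eN]]] := int_Smith_normal_form N.
set D := \matrix_(i, j) _ in eN.
(* exactly the first [r0] invariant factors are nonzero *)
pose r0 := minn (find (pred1 (0 : int)) s) d.
have s_zero (i : 'I_d) : (r0 <= i)%N -> s`_i = 0.
  by rewrite geq_min [(d <= _)%N]leqNgt ltn_ord orbF; apply: sorted_dvdz_zero.
have s_nz (i : 'I_d) : (i < r0)%N -> s`_i != 0.
  by rewrite leq_min => /andP[hi _]; have /negbT := before_find 0 hi.
(* [D = diag(s_0, .., s_(r0-1), 1, .., 1) *m pid_mx r0] has rank [r0] over Q *)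
pose dv := \row_(i < d) (if (i < r0)%N then s`_i else 1).
have eD : D = diag_mx dv *m pid_mx r0.
  apply/matrixP => i j; rewrite mul_diag_mx !mxE.
  have [hi|hi] := ltnP i r0; last by rewrite andbF s_zero // mul0rn mulr0.
  by rewrite andbT; case: eqP; rewrite ?mulr1 ?mulr0.
have u_dv : ratmx (diag_mx dv) \in unitmx.
  rewrite unitmxE /ratmx det_map_mx det_diag unitfE rmorph_prod /=.
  by apply/prodf_neq0 => i _; rewrite mxE intr_eq0; case: ifP => // /s_nz.
have rankN : \rank (ratmx N) = r0.
  rewrite eN !ratmxM mxrank_mulmx_unitr ?ratmx_unit // mxrank_mulmx_unitl ?ratmx_unit //.
  by rewrite eD ratmxM mxrank_mulmx_unitl // /ratmx map_pid_mx rank_pid_mx ?geq_minr.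
exists L => // i j; rewrite rankN => hi.
have -> : invmx L *m N *m L = D *m (R *m L) by rewrite eN !mulmxA mulVmx // mul1mx.
by rewrite mxE big1 // => k _; rewrite mxE s_zero // mul0rn mul0r.
Qed.

(* Conjugating further by the order-reversing permutation moves the zero rows
   to the top: the first [d - rank N] rows vanish. *)
Lemma conj_zero_first_rows d (N : 'M[int]_d) :
  exists2 Q : 'M[int]_d, Q \in unitmx &
    forall i j : 'I_d, (i < d - \rank (ratmx N))%N -> (invmx Q *m N *m Q) i j = 0.
Proof.
have [L uL zero_rows] := conj_zero_last_rows N.
pose s : 'S_d := perm (@rev_ord_inj d).
have sV i : s^-1%g i = rev_ord i.
  have si : s (rev_ord i) = i by rewrite permE rev_ordK.
  by rewrite -{1}si permK.
exists (L *m perm_mx s); first by rewrite unitmx_mul uL unitmx_perm.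
move=> i j hi; rewrite invmx_mul ?unitmx_perm // invmx_perm.
have -> : perm_mx s^-1 *m invmx L *m N *m (L *m perm_mx s) =
          perm_mx s^-1 *m ((invmx L *m N *m L) *m perm_mx s) by rewrite !mulmxA.
rewrite -row_permE mxE sV mxE big1 // => k _; rewrite zero_rows ?mul0r //=.
by rewrite -(subKn (rank_leq_row (ratmx N))) leq_sub2l.
Qed.

Lemma singular_conj_lower_block d (N : 'M[int]_d) : (\rank (ratmx N) < d)%N ->
  exists m r (e : d = (m + r)%N) (Q : 'M[int]_d) (X : 'M[int]_(r, m)) (Y : 'M[int]_r),
    [/\ Q \in unitmx, (0 < m)%N, \rank (ratmx (row_mx X Y)) = r &
        castmx (e, e) (invmx Q *m N *m Q) = block_mx 0 0 X Y].
Proof.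
move=> rank_lt; set r0 := \rank (ratmx N).
have [Q uQ zero_rows] := conj_zero_first_rows N.
have e : d = ((d - r0) + r0)%N by rewrite subnK // ltnW.
set C := castmx (e, e) (invmx Q *m N *m Q).
have C_top : usubmx C = 0.
  by apply/matrixP => i j; rewrite !mxE castmxE zero_rows //=.
have eC : C = block_mx 0 0 (dlsubmx C) (drsubmx C).
  rewrite -[LHS]submxK -[ulsubmx C]/(lsubmx (usubmx C)).
  by rewrite -[ursubmx C]/(rsubmx (usubmx C)) C_top linear0 [rsubmx 0]linear0.
exists (d - r0)%N, r0, e, Q, (dlsubmx C), (drsubmx C).
split => //; first by rewrite subn_gt0.
have rank_dC : \rank (ratmx (dsubmx C)) = \rank (ratmx C).
  by rewrite -{2}(vsubmxK C) C_top /ratmx map_col_mx map_mx0 rank_col_0mx.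
rewrite hsubmxK rank_dC /ratmx map_castmx mxrank_castmx -/(ratmx _) !ratmxM.
by rewrite mxrank_mulmx_unitr ?mxrank_mulmx_unitl ?ratmx_unit ?unitmx_inv.
Qed.

Lemma nilpotent_rank_lt d (N : 'M[int]_d) k : (0 < d)%N -> N ^+ k = 0 ->
  (\rank (ratmx N) < d)%N.
Proof.
case: d N => // d N _ Nk0; rewrite ltn_neqAle rank_leq_row andbT.
apply/negP => /eqP rankN.
have uN : ratmx N \in unitmx by rewrite -row_free_unit /row_free rankN.
have : ratmx (N ^+ k) \in unitmx.
  rewrite /ratmx map_mxX; elim: k {Nk0} => [|k IH]; first by rewrite expr0 unitmx1.
  by rewrite exprS -mulmxE unitmx_mul uN.
by rewrite Nk0 /ratmx map_mx0 unitmxE det0 unitr0.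
Qed.

(* If 1 is the only complex eigenvalue of [S] then [S - 1] is nilpotent: the
   characteristic polynomial of [S] is a power of ['X - 1] (Cayley-Hamilton). *)
Lemma unipotent_of_spec d (S : 'M[int]_d) :
  (forall a : algC, eigenvalue (map_mx (fun z : int => z%:~R : algC) S) a <-> a = 1) ->
  exists k, (S - 1%:M) ^+ k = 0.
Proof.
case: d S => [|n] S spec1; first by exists 0%N; apply/matrixP => [[]].
set Sc := map_mx _ S in spec1.
have [rs char_rs] := closed_field_poly_normal (char_poly Sc).
rewrite (monicP (char_poly_monic Sc)) scale1r in char_rs.
have rs1 z : z \in rs -> z = 1.
  by move=> z_rs; apply/spec1; rewrite eigenvalue_root_char char_rs root_prod_XsubC.
have Sc1 : (Sc - 1%:M) ^+ size rs = 0.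
  have -> : (Sc - 1%:M) ^+ size rs = \prod_(z <- rs) (Sc - z%:M).
    rewrite (eq_big_seq (fun=> Sc - 1%:M)) => [|z /rs1 -> //].
    by rewrite big_const_seq count_predT iter_mulr_1.
  rewrite -(Cayley_Hamilton Sc) char_rs rmorph_prod; apply: eq_bigr => z _.
  by rewrite rmorphB /= horner_mx_X horner_mx_C.
have eSc : Sc - 1%:M = map_mx (fun z : int => z%:~R : algC) (S - 1%:M).
  by rewrite map_mxB map_scalar_mx /= rmorph1.
exists (size rs); apply/matrixP => i j; apply/eqP.
by have /matrixP/(_ i j)/eqP := Sc1; rewrite eSc -map_mxX !mxE intr_eq0.
Qed.

Lemma has_normal_form_unipotent d (S : 'M[int]_d) :
  (exists k, (S - 1%:M) ^+ k = 0) -> has_normal_form S.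
Proof.
elim/ltn_ind: d S => d IH S [k Nk0].
have [d0|d_gt0] := posnP d; first by subst d; apply: has_normal_form0.
have [m [r [e [Q [X [Y [uQ m_gt0 rankXY eN]]]]]]] :=
  singular_conj_lower_block (nilpotent_rank_lt d_gt0 Nk0).
subst d; rewrite castmx_id in eN.
have Yk : Y ^+ k = 0.
  have [Z eNk] := lower_block_expr 0 X Y k.
  move: eNk; rewrite -eN conjmx_expr // Nk0 mulmx0 mul0mx => /(congr1 drsubmx).
  by rewrite block_mxKdr => <-; apply/matrixP => i j; rewrite !mxE.
have nfY : has_normal_form (1%:M + Y).
  apply: IH; first by rewrite -[X in (X < _)%N]add0n ltn_add2r.
  by exists k; rewrite addrAC subrr add0r.
have eS : invmx Q *m S *m Q = block_mx 1%:M 0 X (1%:M + Y).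
  rewrite -[S](subrK 1%:M) mulmxDr mulmxDl eN mulmx1 mulVmx //.
  by rewrite (scalar_mx_block m r) add_block_mx !addr0 add0r addrC.
have := has_normal_form_conj uQ (has_normal_form_extend m_gt0 rankXY nfY).
by rewrite -eS !mulmxA mulmxV // mul1mx mulmxK.
Qed.

Theorem mainTheorem11 (d : nat) (S : 'M[int]_d)
  (hS : S \in unitmx)
  (hspec : forall a : algC, eigenvalue (map_mx (fun z : int => z%:~R : algC) S) a <-> a = 1) :
  exists (ns : seq nat) (P : 'M[int]_d),
    [/\ sorted (fun x y : nat => (y <= x)%N) ns,
        all (fun x : nat => (0 < x)%N) ns,
        sumn ns = d,
        P \in unitmx &
        let A := invmx P *m S *m P in
        [/\ forall a : nat, (a < size ns)%N -> blk ns A a a = 1%:M,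
            forall a b : nat, (a < b)%N -> (b < size ns)%N -> blk ns A a b = 0 &
            forall a : nat, (0 < a)%N -> (a < size ns)%N ->
              zrank (blk ns A a a.-1) = nth 0%N ns a]].
Proof. exact: has_normal_form_unipotent (unipotent_of_spec hspec). Qed.
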